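(* Let $s\ge2$ and let $G$ be a $K_{2,s}$-free graph. Then $G$ is strongly $d$-degenerate, where \[d=d(G):=\left\lfloor(2\widetilde{\nabla}_0(G)-2)(s-1)\widetilde{\nabla}_{1/2}(G)+2\widetilde{\nabla}_0(G)\right\rfloor<2s\,\widetilde{\nabla}_0(G)\,\widetilde{\nabla}_{1/2}(G)\le 2s\,\widetilde{\nabla}_{1/2}(G)^2.\]
   Context: A graph $H$ is a shallow topological minor of $G$ at depth $a$ ($a\ge0$ a half-integer) if $G$ contains as a subgraph a subdivision of $H$ in which every edge of $H$ is replaced by a path of length at most $2a+1$ (internally vertex-disjoint). $\widetilde{\nabla}_a(G)$ is the maximum of $e(H)/v(H)$ over all non-empty shallow topological minors $H$ of $G$ at depth $a$. A graph is $K_{2,s}$-free if it has no subgraph isomorphic to $K_{2,s}$. For an integer $d\ge1$, a vertex $v$ of $G$ is $d$-removable in $G$ if $d_G(v)\le d$ and at most one neighbour $w$ of $v$ has $d_G(w)>d$; $G$ is strongly $d$-degenerate if every non-empty subgraph $G'$ of $G$ contains a vertex $d$-removable in $G'$. *)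

From mathcomp Require Import all_boot all_order all_algebra.
Set Implicit Arguments. Unset Strict Implicit. Unset Printing Implicit Defensive.
Import Order.TTheory GRing.Theory Num.Theory.

Definition simple_graph (T : finType) (e : rel T) : Prop :=
  irreflexive e /\ symmetric e.

(* e(H)/v(H) for a finite simple graph H = (U, eH); the edge count is half
   the number of ordered adjacent pairs. *)
Definition density (U : finType) (eH : rel U) : rat :=
  ((#|[set p : U * U | eH p.1 p.2]|)%:R / (2 * #|U|)%:R)%R.

(* H = (U, eH) is a shallow topological minor of G = (T, e) at depth k/2
   (k : nat, so every half-integer depth a >= 0 is a = k/2): there is an
   injective map phi of the vertices of H to (branch) vertices of G and, for
   every edge uv of H, a path of G from phi u to phi v whose sequence of
   internal vertices is P u v; every such path has length
   size (P u v) + 1 <= 2a+1 = k+1, is a genuine path (no repeated vertex),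
   its internal vertices are not branch vertices, and paths of distinct
   edges of H are internally vertex-disjoint. *)
Definition shallow_top_minor (k : nat) (T : finType) (e : rel T)
    (U : finType) (eH : rel U) : Prop :=
  exists (phi : U -> T) (P : U -> U -> seq T),
    [/\ injective phi,
        (forall u v, eH u v -> P v u = rev (P u v)),
        (forall u v, eH u v ->
           [/\ path e (phi u) (rcons (P u v) (phi v)),
               uniq (phi u :: rcons (P u v) (phi v)),
               size (P u v) <= k &
               (forall x w, x \in P u v -> x != phi w)]) &
        (forall u v u' v' x, eH u v -> eH u' v' ->
           x \in P u v -> x \in P u' v' ->
           (u = u' /\ v = v') \/ (u = v' /\ v = u'))].

(* t = \widetilde{\nabla}_{k/2}(G): t is the maximum of e(H)/v(H) over all
   non-empty shallow topological minors H of G at depth k/2 (attained, and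
   an upper bound). *)
Definition tnabla_is (k : nat) (T : finType) (e : rel T) (t : rat) : Prop :=
  (exists (U : finType) (eH : rel U),
     [/\ simple_graph eH, (0 < #|U|)%N, shallow_top_minor k e eH &
         density eH = t]) /\
  (forall (U : finType) (eH : rel U),
     simple_graph eH -> (0 < #|U|)%N -> shallow_top_minor k e eH ->
     (density eH <= t)%R).

Definition has_K2s (s : nat) (T : finType) (e : rel T) : Prop :=
  exists (a b : T) (C : {set T}),
    [/\ a != b, #|C| = s, a \notin C, b \notin C &
        forall c, c \in C -> e a c && e b c].

Definition K2s_free (s : nat) (T : finType) (e : rel T) : Prop :=
  ~ has_K2s s e.

Definition subgraph (T : finType) (e : rel T) (S : {set T}) (E' : rel T)
  : Prop :=
  symmetric E' /\
  (forall x y, E' x y -> [/\ x \in S, y \in S & e x y]).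

Definition deg (T : finType) (S : {set T}) (E' : rel T) (x : T) : nat :=
  #|[set y in S | E' x y]|.

Definition removable (d : int) (T : finType) (S : {set T}) (E' : rel T)
    (v : T) : bool :=
  [&& v \in S, ((deg S E' v)%:Z <= d)%R &
      (#|[set w in S | E' v w & (d < (deg S E' w)%:Z)%R]| <= 1)%N].

Definition strongly_degenerate (d : int) (T : finType) (e : rel T) : Prop :=
  forall (S : {set T}) (E' : rel T), subgraph e S E' -> S != set0 ->
    exists v, removable d S E' v.

(* Suppose a non-empty subgraph (S, E) of G has no d-removable vertex. Call a
   vertex heavy if its degree in (S, E) exceeds d and light otherwise; every
   light vertex then has at least two heavy neighbours. The edges of (S, E)
   meeting a heavy vertex form a subgraph of G whose degree sum is at least
   (d+1)|heavy| + 2|light|, so density gives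
   (d+1)|heavy| + 2|light| <= 2 t0 (|heavy| + |light|).
   Routing, through each light vertex, a path between two of its heavy
   neighbours yields a shallow topological minor at depth 1/2 on the heavy
   vertices; since G is K_{2,s}-free, each of its edges carries fewer than s
   light vertices, whence |light| <= (s-1) t1 |heavy|. Together these force
   d+1 <= (2 t0 - 2)(s-1) t1 + 2 t0, against the choice of d as the floor of
   the right-hand side. *)

From mathcomp Require Import all_boot all_order all_algebra.
From mathcomp Require Import lra zify.
Import Order.TTheory GRing.Theory Num.Theory.

Definition adj_pairs {T : finType} (W : {set T}) (R : rel T) : {set T * T} :=
  [set p | [&& p.1 \in W, p.2 \in W & R p.1 p.2]].

Definition induced {T : finType} (W : {set T}) (R : rel T) : rel {x | x \in W} :=
  fun u v => R (val u) (val v).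

Lemma card_adj_pairs (T : finType) (W : {set T}) (R : rel T) :
  #|adj_pairs W R| = (\sum_(x in W) deg W R x)%N.
Proof.
rewrite -sum1_card big_mkcond /=.
rewrite (eq_bigr (fun p : T * T => ([&& p.1 \in W, p.2 \in W & R p.1 p.2] : nat))); last first.
  by move=> p _; rewrite inE; case: (_ && _).
rewrite -(pair_big xpredT xpredT (fun x y => ([&& x \in W, y \in W & R x y] : nat))) /=.
rewrite [RHS]big_mkcond; apply: eq_bigr => x _.
rewrite /deg -sum1_card.
case: (x \in W); last by rewrite big1.
by rewrite [RHS]big_mkcond; apply: eq_bigr => y _; rewrite inE.
Qed.

Lemma card_induced_adj_pairs (T : finType) (W : {set T}) (R : rel T) :
  #|[set p : {x | x \in W} * {x | x \in W} | induced W R p.1 p.2]| = #|adj_pairs W R|.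
Proof.
pose f (p : {x | x \in W} * {x | x \in W}) := (val p.1, val p.2).
have f_inj : injective f by move=> [u v] [u' v'] [/val_inj-> /val_inj->].
rewrite -(card_imset _ f_inj); apply: eq_card => -[x y].
rewrite [in RHS]inE; apply/imsetP/and3P => [[[u v] uv [-> ->]]|[xW yW xy]].
  by move: uv; rewrite inE /induced => uv; rewrite !(valP u, valP v).
by exists (exist _ x xW, exist _ y yW); rewrite ?inE.
Qed.

Lemma shallow_top_minor_mono {k k' : nat} {T : finType} {e : rel T}
    {U : finType} {eH : rel U} :
  (k <= k')%N -> shallow_top_minor k e eH -> shallow_top_minor k' e eH.
Proof.
move=> le_kk' [phi [P [phi_inj PC paths disj]]]; exists phi, P; split=> // u v.
by case/paths=> ? ? le_k ?; split=> //; apply: leq_trans le_kk'.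
Qed.

Lemma tnabla_ge0 {k : nat} {T : finType} {e : rel T} {t : rat} :
  tnabla_is k e t -> (0 <= t)%R.
Proof. by case=> -[U [eH [_ _ _ <-]]] _; rewrite divr_ge0. Qed.

Lemma tnabla_mono {k k' : nat} {T : finType} {e : rel T} {t t' : rat} :
  (k <= k')%N -> tnabla_is k e t -> tnabla_is k' e t' -> (t <= t')%R.
Proof.
move=> le_kk' [[U [eH [sH U_gt0 minor <-]]] _] [_ max_t'].
exact: max_t' sH U_gt0 (shallow_top_minor_mono le_kk' minor).
Qed.

Lemma tnabla_card_adj_pairs {k : nat} {T : finType} {e : rel T} {t : rat}
    {W : {set T}} {R : rel T} :
  tnabla_is k e t -> W != set0 -> irreflexive R -> symmetric R ->
  shallow_top_minor k e (induced W R) ->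
  ((#|adj_pairs W R|)%:R <= t * (2 * #|W|)%:R :> rat)%R.
Proof.
move=> [_ max_t] W_neq0 irrR symR minor.
have cardU : #|{: {x | x \in W}}| = #|W| by rewrite card_sig; apply: eq_card.
have U_gt0 : (0 < #|{: {x | x \in W}}|)%N by rewrite cardU card_gt0.
have := max_t _ (induced W R) (conj (fun u => irrR (val u)) (fun u v => symR _ _)) U_gt0 minor.
by rewrite /density card_induced_adj_pairs cardU ler_pdivrMr // ltr0n muln_gt0 card_gt0.
Qed.

Lemma subgraph_minor {k : nat} {T : finType} {e : rel T} {W : {set T}} {R : rel T} :
  irreflexive e -> subrel R e -> shallow_top_minor k e (induced W R).
Proof.
move=> irr_e sub_Re; exists val, (fun _ _ => [::]); split=> //; first exact: val_inj.
move=> u v /sub_Re e_uv; split=> //=; first by rewrite e_uv.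
by rewrite inE andbT; apply: contraTneq e_uv => /val_inj->; rewrite irr_e.
Qed.

Lemma subdivision_minor {T : finType} {e : rel T} {W : {set T}} {R : rel T}
    (mid : T -> T -> T) :
  irreflexive R ->
  (forall x y, R x y ->
     [/\ mid x y = mid y x, mid x y \notin W, e x (mid x y) & e (mid x y) y]) ->
  (forall x y x' y', R x y -> R x' y' -> mid x y = mid x' y' ->
     (x = x' /\ y = y') \/ (x = y' /\ y = x')) ->
  shallow_top_minor 1 e (induced W R).
Proof.
move=> irrR midP mid_inj.
exists val, (fun u v => [:: mid (val u) (val v)]); split=> //.
- exact: val_inj.
- by move=> u v /midP[->].
- move=> u v R_uv; have [_ midW e_um e_mv] := midP _ _ R_uv.
  split=> //=; first by rewrite e_um e_mv.
  + rewrite !inE !negb_or andbT -andbA; apply/and3P; split.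
    * by apply: contraNneq midW => <-; apply: valP.
    * by apply: contraTneq R_uv => /val_inj->; rewrite /induced irrR.
    * by apply: contraNneq midW => ->; apply: valP.
  + by move=> x w; rewrite inE => /eqP->; apply: contraNneq midW => ->; apply: valP.
- move=> u v u' v' x R_uv R_uv'; rewrite !inE => /eqP-> /eqP mid_eq.
  by case: (mid_inj _ _ _ _ R_uv R_uv' mid_eq) => -[/val_inj-> /val_inj->]; [left|right].
Qed.

Lemma density_count_bound (t0 c h l D : rat) :
  (0 < h -> 0 <= l -> 1 <= D ->
   h * (D + 1) + l * 2 <= t0 * (2 * (h + l)) -> l <= c * h ->
   D + 1 <= (2 * t0 - 2) * c + 2 * t0)%R.
Proof.
move=> h_gt0 l_ge0 D_ge1 count0 count1; rewrite -(ler_pM2l h_gt0).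
have [t0_ge1 | t0_lt1] := lerP 1 t0.
  have : ((t0 - 1) * l <= (t0 - 1) * (c * h))%R by apply: ler_wpM2l; lra.
  nra.
have : (0 <= (1 - t0) * l)%R by apply: mulr_ge0; lra.
nra.
Qed.

Section NonRemovableSubgraph.

Context {T : finType} {e : rel T} {S : {set T}} {E : rel T} {d : nat}.
Hypothesis irr_e : irreflexive e.
Hypothesis symE : symmetric E.
Hypothesis subE : forall x y, E x y -> [/\ x \in S, y \in S & e x y].
Hypothesis no_removable : forall v, ~~ removable d S E v.

Definition heavy : {set T} := [set w in S | d < deg S E w]%N.
Definition light : {set T} := S :\: heavy.
Definition heavy_nbrs (v : T) : {set T} := [set w in heavy | E v w].

Lemma heavy_sub : heavy \subset S.
Proof. by apply/subsetP => w; rewrite inE => /andP[]. Qed.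

Lemma card_heavy_nbrs_light {v} : v \in light -> (1 < #|heavy_nbrs v|)%N.
Proof.
rewrite inE => /andP[v_light vS]; move: v_light (no_removable v).
rewrite /removable inE vS lez_nat -leqNgt => -> /=; rewrite -ltnNge.
move/leq_trans; apply; apply: subset_leq_card; apply/subsetP => w.
by rewrite !inE ltz_nat => /and3P[-> -> ->].
Qed.

Lemma heavy_nbrs_light {v w} :
  v \in light -> w \in heavy_nbrs v -> [/\ w \in heavy, w != v, e v w & e w v].
Proof.
rewrite !inE => /andP[v_light _] /andP[w_heavy Evw]; split=> //.
- by apply: contraTneq w_heavy => ->.
- by have [] := subE _ _ Evw.
- by rewrite symE in Evw; have [] := subE _ _ Evw.
Qed.

Lemma heavy_neq0 : S != set0 -> heavy != set0.
Proof.
case/set0Pn=> v vS; apply/set0Pn; have [|v_light] := boolP (v \in heavy); first by exists v.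
have /card_gt0P[w] : (0 < #|heavy_nbrs v|)%N.
  by apply/ltnW/card_heavy_nbrs_light; rewrite inE v_light.
by rewrite inE => /andP[w_heavy _]; exists w.
Qed.

Definition heavy_edge : rel T := fun x y => E x y && ((x \in heavy) || (y \in heavy)).

Lemma heavy_edge_sub : subrel heavy_edge e.
Proof. by move=> x y /andP[/subE[]]. Qed.

Lemma heavy_edge_irr : irreflexive heavy_edge.
Proof. by move=> x; apply/negbTE/negP => /heavy_edge_sub; rewrite irr_e. Qed.

Lemma heavy_edgeC : symmetric heavy_edge.
Proof. by move=> x y; rewrite /heavy_edge symE orbC. Qed.

Lemma card_adj_heavy_edges :
  (#|heavy| * d.+1 + #|light| * 2 <= #|adj_pairs S heavy_edge|)%N.
Proof.
rewrite card_adj_pairs (big_setID heavy) /= (setIidPr heavy_sub) -!sum_nat_const.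
apply: leq_add; apply: leq_sum => x x_in.
  apply: (leq_trans (_ : d < deg S E x)%N); first by move: x_in; rewrite inE => /andP[].
  by apply: subset_leq_card; apply/subsetP => y; rewrite !inE /heavy_edge x_in => /andP[-> ->].
apply: leq_trans (card_heavy_nbrs_light x_in) _; apply: subset_leq_card.
apply/subsetP => y; rewrite [y \in heavy_nbrs x]inE => /andP[y_heavy Exy].
by rewrite inE (subsetP heavy_sub _ y_heavy) /heavy_edge Exy y_heavy orbT.
Qed.

Definition end1 (v : T) : T := nth v (enum (heavy_nbrs v)) 0.
Definition end2 (v : T) : T := nth v (enum (heavy_nbrs v)) 1.
Definition ends (v : T) : {set T * T} := [set (end1 v, end2 v); (end2 v, end1 v)].
Definition hub (p : T * T) : {set T} := [set v in light | p \in ends v].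
Definition hub_edge : rel T := fun x y => hub (x, y) != set0.
Definition hub_center (x y : T) : T := odflt x [pick v in hub (x, y)].

Lemma light_ends {v} :
  v \in light -> [/\ end1 v \in heavy_nbrs v, end2 v \in heavy_nbrs v & end1 v != end2 v].
Proof.
move/card_heavy_nbrs_light; rewrite cardE => size_gt1.
rewrite -2![_ \in heavy_nbrs v]mem_enum /end1 /end2 !mem_nth ?(ltnW size_gt1) //.
by rewrite nth_uniq ?enum_uniq ?(ltnW size_gt1).
Qed.

Lemma mem_hub {x y v} :
  v \in hub (x, y) -> [/\ v \in light, x \in heavy_nbrs v, y \in heavy_nbrs v & x != y].
Proof.
rewrite inE => /andP[v_light]; have [h1 h2 ne12] := light_ends v_light.
by rewrite /ends in_set2 => /orP[] /eqP[-> ->]; split; rewrite // eq_sym.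
Qed.

Lemma hubC x y : hub (x, y) = hub (y, x).
Proof. by apply/setP => v; rewrite !inE !xpair_eqE; do !case: eqP. Qed.

Lemma card_hub_lt (s : nat) p : (0 < s)%N -> K2s_free s e -> (#|hub p| < s)%N.
Proof.
case: p => x y s_gt0 K2s_free_e; rewrite ltnNge.
apply/negP => /card_geqP[c [c_uniq size_c c_hub]].
have hubP v : v \in [set v in c] -> [/\ e x v, e y v, x != v, y != v & x != y].
  rewrite inE => /c_hub/mem_hub[v_light /(heavy_nbrs_light v_light)[_ xv _ ex]].
  by case/(heavy_nbrs_light v_light)=> _ yv _ ey xy; rewrite ex ey xv yv xy.
have [u u_c] : exists u, u \in c.
  by move: s_gt0; rewrite -size_c; case: (c) => // v c' _; exists v; rewrite mem_head.
apply: K2s_free_e; exists x, y, [set v in c]; split.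
- by have [] := hubP u; rewrite ?inE.
- by rewrite -size_c -(card_uniqP c_uniq); apply: eq_card => v; rewrite inE.
- by apply/negP => /hubP[_ _]; rewrite eqxx.
- by apply/negP => /hubP[_ _ _]; rewrite eqxx.
- by move=> v /hubP[-> ->].
Qed.

Lemma hub_center_mem {x y} : hub_edge x y -> hub_center x y \in hub (x, y).
Proof. by rewrite /hub_center; case: pickP => [v ->|none /set0Pn[v]]; rewrite ?none. Qed.

Lemma hub_centerC x y : hub_edge x y -> hub_center x y = hub_center y x.
Proof.
rewrite /hub_edge /hub_center hubC.
by case: pickP => [//|none /set0Pn[v]]; rewrite none.
Qed.

Lemma hub_edge_irr : irreflexive hub_edge.
Proof. by move=> x; apply/negbTE/set0Pn => -[v /mem_hub[_ _ _]]; rewrite eqxx. Qed.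

Lemma hub_edgeC : symmetric hub_edge.
Proof. by move=> x y; rewrite /hub_edge hubC. Qed.

Lemma hub_edge_minor : shallow_top_minor 1 e (induced heavy hub_edge).
Proof.
apply: (subdivision_minor hub_center hub_edge_irr).
- move=> x y xy; have [v_light x_nbr y_nbr _] := mem_hub (hub_center_mem xy).
  have [_ _ _ e_xv] := heavy_nbrs_light v_light x_nbr.
  have [_ _ e_vy _] := heavy_nbrs_light v_light y_nbr.
  split=> //; first exact: hub_centerC.
  by move: v_light; rewrite inE => /andP[].
- move=> x y x' y' xy xy' eq_center.
  have := hub_center_mem xy; have := hub_center_mem xy'; rewrite -eq_center.
  move: (hub_center x y) => v.
  rewrite !inE => /andP[_] /orP[] /eqP[-> ->] /andP[_] /orP[] /eqP[-> ->];
    by [left | right].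
Qed.

Lemma sum_card_hub : (\sum_(p in adj_pairs heavy hub_edge) #|hub p|)%N = (#|light| * 2)%N.
Proof.
have hub0 p : p \notin adj_pairs heavy hub_edge -> #|hub p| = 0%N.
  case: p => x y; apply: contraNeq; rewrite cards_eq0 => /set0Pn[v v_hub].
  have [v_light x_nbr y_nbr _] := mem_hub v_hub.
  have [x_heavy _ _ _] := heavy_nbrs_light v_light x_nbr.
  have [y_heavy _ _ _] := heavy_nbrs_light v_light y_nbr.
  by rewrite inE x_heavy y_heavy; apply/set0Pn; exists v.
rewrite big_mkcond (eq_bigr (fun p => #|hub p|)) => [|p _]; last first.
  by case: ifPn => // /hub0.
rewrite -sum_nat_const [RHS](eq_bigr (fun v => \sum_(p in ends v) 1)%N) => [|v v_light].
  by rewrite (exchange_big_dep predT) //=; apply: eq_bigr => p _; rewrite sum1dep_card.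
  have [_ _ ends_neq] := light_ends v_light.
by rewrite sum1_card cards2 xpair_eqE (negbTE ends_neq).
Qed.

Lemma non_removable_bound (s : nat) (t0 t1 : rat) :
  (0 < s)%N -> K2s_free s e -> tnabla_is 0 e t0 -> tnabla_is 1 e t1 ->
  S != set0 -> (1 <= d)%N ->
  (d.+1%:R <= (2 * t0 - 2) * (s.-1)%:R * t1 + 2 * t0 :> rat)%R.
Proof.
move=> s_gt0 K2s_free_e T0 T1 S_neq0 d_ge1.
have depth0 := tnabla_card_adj_pairs T0 S_neq0 heavy_edge_irr heavy_edgeC
  (subgraph_minor irr_e heavy_edge_sub).
have depth1 := tnabla_card_adj_pairs T1 (heavy_neq0 S_neq0) hub_edge_irr hub_edgeC
  hub_edge_minor.
have count0 := card_adj_heavy_edges.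
have count1 : (#|light| * 2 <= #|adj_pairs heavy hub_edge| * s.-1)%N.
  rewrite -sum_card_hub -sum_nat_const; apply: leq_sum => p _.
  by rewrite -ltnS prednK // card_hub_lt.
have cardS : #|S| = (#|heavy| + #|light|)%N.
  by rewrite -(cardsID heavy S) (setIidPr heavy_sub).
rewrite -natr1 -mulrA.
apply: (density_count_bound _ _ #|heavy|%:R #|light|%:R).
- by rewrite ltr0n card_gt0 heavy_neq0.
- exact: ler0n.
- by rewrite ler1n.
- rewrite cardS natrM natrD in depth0; apply: le_trans depth0.
  by rewrite natr1 -!natrM -natrD ler_nat.
- have := ler_wpM2r (ler0n rat s.-1) depth1.
  by move: count1; rewrite -(ler_nat rat) !natrM; lra.
Qed.

End NonRemovableSubgraph.

Lemma strongly_degenerate_of_bound (s : nat) (T : finType) (e : rel T) (t0 t1 : rat)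
    (d : nat) :
  irreflexive e -> (0 < s)%N -> K2s_free s e ->
  tnabla_is 0 e t0 -> tnabla_is 1 e t1 -> (1 <= d)%N ->
  ((2 * t0 - 2) * (s.-1)%:R * t1 + 2 * t0 < d.+1%:R)%R ->
  strongly_degenerate d e.
Proof.
move=> irr_e s_gt0 K2s_free_e T0 T1 d_ge1 d_gt S E [symE subE] S_neq0.
case: (pickP (removable d S E)) => [v v_rem | no_removable]; first by exists v.
have := non_removable_bound irr_e symE subE (fun v => negbT (no_removable v))
  s t0 t1 s_gt0 K2s_free_e T0 T1 S_neq0 d_ge1.
by rewrite leNgt d_gt.
Qed.

Lemma degeneracy_bound_lt (s : nat) (t0 t1 : rat) (d : int) :
  (2 <= s)%N -> (0 <= t0)%R -> (t0 <= t1)%R -> (1 <= d)%R ->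
  (d%:~R <= (2 * t0 - 2) * (s.-1)%:R * t1 + 2 * t0)%R ->
  (d%:~R < 2 * s%:R * t0 * t1)%R.
Proof.
move=> s_ge2 t0_ge0 t0_le_t1 d_ge1 d_le.
have s1_ge1 : (1 <= (s.-1)%:R :> rat)%R by rewrite ler1n; lia.
have d_ge1' : (1 <= d%:~R :> rat)%R by rewrite ler1z.
have -> : (s%:R = (s.-1)%:R + 1 :> rat)%R by rewrite natr1 prednK //; lia.
have t0_gt0 : (0 < t0)%R.
  rewrite lt_neqAle t0_ge0 andbT; apply: contraTneq d_le => <-.
  have : (0 <= (s.-1)%:R * t1 :> rat)%R by apply: mulr_ge0; lra.
  rewrite -ltNge; lra.
have : (0 < t0 * t1)%R by apply: mulr_gt0; lra.
have : (t1 <= (s.-1)%:R * t1)%R by rewrite ler_peMl //; lra.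
nra.
Qed.

Theorem proposition3p1 (s : nat) (T : finType) (e : rel T) (t0 t1 : rat)
    (d : int) :
  (2 <= s)%N -> simple_graph e -> K2s_free s e ->
  tnabla_is 0 e t0 -> tnabla_is 1 e t1 ->
  d = Num.floor (((2 * t0 - 2) * (s.-1)%:R * t1 + 2 * t0)%R) ->
  (1 <= d)%R ->
  [/\ strongly_degenerate d e,
      (d%:~R < 2 * s%:R * t0 * t1)%R &
      (2 * s%:R * t0 * t1 <= 2 * s%:R * t1 ^+ 2)%R].
Proof.
move=> s_ge2 [irr_e _] K2s_free_e T0 T1 d_def d_ge1.
have t0_le_t1 := tnabla_mono (isT : (0 <= 1)%N) T0 T1.
have t0_ge0 := tnabla_ge0 T0.
have d_le : (d%:~R <= (2 * t0 - 2) * (s.-1)%:R * t1 + 2 * t0)%R by rewrite d_def floor_le.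
split.
- case: d d_def d_ge1 {d_le} => [n|//] d_def d_ge1.
  apply: strongly_degenerate_of_bound irr_e _ K2s_free_e T0 T1 _ _ => //; first lia.
  by rewrite [(n.+1)%:R%R]pmulrn -floor_lt_int -d_def ltz_nat.
- exact: degeneracy_bound_lt.
- by rewrite expr2 mulrA ler_wpM2r ?ler_wpM2l ?mulr_ge0 ?(tnabla_ge0 T1).
Qed.
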